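(* Let $\mathcal{D}$ be a finite set with a metric $d$, let $\phi:\mathcal{D}\to\mathbb{R}^{d'}$, and let $M>0$, $m>0$. Suppose that $\ell_T(x_a,x_p,x_n;\phi,m)=0$ for all $x_a\in\mathcal{D}$, $x_p\in B_M(x_a)$, $x_n\in\bar B_M(x_a)$. Then for all $x_i,x_r\in\mathcal{D}$ with $\|\phi(x_i)-\phi(x_r)\|<m$ we have $d(x_i,x_r)<M$.
   Context: $\|\cdot\|$ is the Euclidean norm. $B_M(x)=\{x'\in\mathcal{D}: d(x,x')<M\}$ and $\bar B_M(x)=\mathcal{D}\setminus B_M(x)$. The per-example triplet loss is $\ell_T(x_a,x_p,x_n;\phi,m)=\max(0,\,m+\|\phi(x_a)-\phi(x_p)\|-\|\phi(x_a)-\phi(x_n)\|)$. *)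

From mathcomp Require Import all_boot all_order all_algebra.
Set Implicit Arguments. Unset Strict Implicit. Unset Printing Implicit Defensive.
Import Order.TTheory GRing.Theory Num.Theory.
Local Open Scope ring_scope.

Definition enorm (R : rcfType) (n : nat) (v : 'rV[R]_n) : R :=
  Num.sqrt (\sum_(i < n) v ord0 i ^+ 2).

Definition is_metric (R : realDomainType) (T : Type) (d : T -> T -> R) : Prop :=
  (forall x y, 0 <= d x y) /\
  (forall x y, d x y = 0 <-> x = y) /\
  (forall x y, d x y = d y x) /\
  (forall x y z, d x z <= d x y + d y z).

Definition ball_M (R : realDomainType) (T : Type) (d : T -> T -> R) (M : R) (x : T) : T -> Prop :=
  fun x' => d x x' < M.
Definition coball_M (R : realDomainType) (T : Type) (d : T -> T -> R) (M : R) (x : T) : T -> Prop :=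
  fun x' => ~ ball_M d M x x'.

Definition triplet_loss (R : rcfType) (T : Type) (n : nat) (phi : T -> 'rV[R]_n) (m : R)
  (xa xp xn : T) : R :=
  Num.max 0 (m + enorm (phi xa - phi xp) - enorm (phi xa - phi xn)).

From mathcomp Require Import all_boot all_order all_algebra.
Set Implicit Arguments. Unset Strict Implicit. Unset Printing Implicit Defensive.
Import Order.TTheory GRing.Theory Num.Theory.
Local Open Scope ring_scope.

(* Use the anchor itself as the positive example: since d(x, x) = 0 < M, a
   vanishing loss forces every point outside B_M(x) to be embedded at distance
   at least m from x. *)

Lemma enorm0 (R : rcfType) (n : nat) : enorm (0 : 'rV[R]_n) = 0.
Proof. by rewrite /enorm big1 ?sqrtr0 // => i _; rewrite mxE expr0n. Qed.

Lemma metric_refl (R : realDomainType) (T : Type) (d : T -> T -> R) (x : T) :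
  is_metric d -> d x x = 0.
Proof. by case=> _ [d0 _]; apply/d0. Qed.

Lemma triplet_loss_eq0 (R : rcfType) (T : Type) (n : nat) (phi : T -> 'rV[R]_n)
    (m : R) (xa xp xn : T) :
  (triplet_loss phi m xa xp xn == 0) =
  (m + enorm (phi xa - phi xp) <= enorm (phi xa - phi xn)).
Proof.
rewrite /triplet_loss -[in RHS]subr_le0.
set a := (_ - _).
by case: (leP 0 a) => [le0a | /ltW ->]; rewrite ?eqxx // eq_le le0a andbT.
Qed.

Lemma triplet_loss_anchor_eq0 (R : rcfType) (T : Type) (n : nat)
    (phi : T -> 'rV[R]_n) (m : R) (x xn : T) :
  triplet_loss phi m x x xn = 0 -> m <= enorm (phi x - phi xn).
Proof. by move/eqP; rewrite triplet_loss_eq0 subrr enorm0 addr0. Qed.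

Theorem lemma1 (R : rcfType) (T : finType) (d : T -> T -> R) (n : nat)
  (phi : T -> 'rV[R]_n) (M m : R) :
  is_metric d -> 0 < M -> 0 < m ->
  (forall xa xp xn, ball_M d M xa xp -> coball_M d M xa xn ->
     triplet_loss phi m xa xp xn = 0) ->
  forall xi xr, enorm (phi xi - phi xr) < m -> d xi xr < M.
Proof.
move=> dP M0 _ loss0 xi xr lt_m; rewrite ltNge; apply/negP => le_M.
have ball_xi : ball_M d M xi xi by rewrite /ball_M metric_refl.
have coball_xr : coball_M d M xi xr by rewrite /coball_M /ball_M ltNge le_M.
have := triplet_loss_anchor_eq0 (loss0 _ _ _ ball_xi coball_xr).
by rewrite leNgt lt_m.
Qed.
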